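(* There exists $n_0$ such that for every prime $n\ge n_0$ and every $q\in\{1,\dots,n-1\}$, every eigenvalue of the real symmetric matrix $\mathcal M_{n,q}$ defined below is at most $4-\frac{3}{5n}$.
   Context: For an integer $n\ge 3$ and an integer $q$, $\mathcal M_{n,q}=(a_{jk})_{j,k=0}^{n-1}$ is the $n\times n$ real matrix with diagonal entries $a_{jj}=2\cos\frac{2\pi qj}{n}$, with $a_{j,j+1}=a_{j+1,j}=1$ for $0\le j\le n-2$, $a_{0,n-1}=a_{n-1,0}=1$, and all other entries $0$. It is the matrix of the element $\tilde\Delta_n=x+x^{-1}+y+y^{-1}$ of the group algebra of the finite Heisenberg group $H_n$ in the $n$-dimensional representation $T_q$ given by $T_q(x)u_j=u_{j+1}$, $T_q(y)u_j=e^{2\pi iqj/n}u_j$ (indices mod $n$). *)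

From HB Require Import structures.
From mathcomp Require Import all_boot all_order all_algebra.
From mathcomp Require Import all_classical all_reals all_analysis.
Set Implicit Arguments. Unset Strict Implicit. Unset Printing Implicit Defensive.
Import Order.TTheory GRing.Theory Num.Theory.
Local Open Scope ring_scope.

Definition Mnq (R : realType) (n q : nat) : 'M[R]_n :=
  \matrix_(j < n, k < n)
    ((if j == k then 2 * cos (2 * pi * q%:R * (nat_of_ord j)%:R / n%:R) else 0) +
     (if (nat_of_ord k == (j.+1 %% n)%N) || (nat_of_ord j == (k.+1 %% n)%N)
      then 1 else 0)).

From HB Require Import structures.
From mathcomp Require Import all_boot all_order all_algebra.
From mathcomp Require Import all_classical all_reals all_analysis.
From mathcomp Require Import ring lra zify.
Set Implicit Arguments.
Unset Strict Implicit.
Unset Printing Implicit Defensive.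
Import Order.TTheory GRing.Theory Num.Theory.
Local Open Scope ring_scope.

(* If v is an eigenvector of M_{n,q} for the eigenvalue a, then
     (4 - a) |v|^2 = sum_j w_j v_j^2 + sum_j (v_j - v_{j+1})^2     (indices mod n)
   with weights w_j = 2 - 2 cos (2 pi q j / n) >= 0, so it suffices to bound |v|^2 by
   5n/3 times the right-hand side.  Cut the cycle into about sqrt(3n)/2 blocks of
   length l ~ sqrt(4n/3).  On a block of total weight W, comparing each v_i with each
   v_k along the path between them gives
     W |v|^2 <= 2 l sum w v^2 + l^2 W sum (v_j - v_{j+1})^2.
   As q is invertible mod n, the residues q j mod n on a block are distinct, so at most
   2t+1 of them lie within distance t of 0; together with 2 - 2 cos (2 pi x) >= 68/5 x^2
   for |x| <= 1/8 this forces W >= 6 l / (5 n), and the two estimates combine. *)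

Section Trigonometry.
Variable R : realType.
Implicit Types a x y : R.

Lemma ler_cos_pi x y : 0 <= x -> x <= y -> y <= pi -> cos y <= cos x.
Proof.
move=> x0 xy ypi; have [->//|x_neq_y] := eqVneq x y.
have x_in : x \in `[0, pi] by rewrite in_itv /= x0 (le_trans xy ypi).
have y_in : y \in `[0, pi] by rewrite in_itv /= ypi (le_trans x0 xy).
by apply/ltW; rewrite ltr_cos // lt_neqAle x_neq_y.
Qed.

Lemma ler_sin_pihalf x y : - (pi / 2) <= x -> x <= y -> y <= pi / 2 -> sin x <= sin y.
Proof.
move=> x0 xy ypi; have [->//|x_neq_y] := eqVneq x y.
have x_in : x \in `[- (pi / 2), pi / 2] by rewrite in_itv /= x0 (le_trans xy ypi).
have y_in : y \in `[- (pi / 2), pi / 2] by rewrite in_itv /= ypi (le_trans x0 xy).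
by apply/ltW; rewrite ltr_sin // lt_neqAle x_neq_y.
Qed.

Lemma norm_sin_mulrn x (k : nat) : `|sin (x *+ k)| <= k%:R * `|sin x|.
Proof.
elim: k => [|k IH]; first by rewrite mulr0n sin0 normr0 mul0r.
rewrite mulrSr sinD -addn1 natrD mulrDl mul1r (le_trans (ler_normD _ _)) //.
rewrite !normrM lerD //.
  by rewrite -[leRHS]mulr1 ler_pM ?normr_ge0 ?cos_max.
by rewrite -[leRHS]mul1r ler_pM ?normr_ge0 ?cos_max.
Qed.

(* A Jordan-type inequality, proved without calculus: with k = floor(1/(2a)) one
   has cos(pi a) = sin(pi/2 - pi a) <= sin(k pi a) <= k sin(pi a). *)
Lemma cos_mul_le_sin a : 0 <= a <= 1 / 2 -> 2 * a * cos (pi * a) <= sin (pi * a).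
Proof.
case/andP=> a0 a_half; have pi0 := pi_gt0 R.
have [->|a_neq0] := eqVneq a 0; first by rewrite mulr0 mul0r mulr0 sin0.
have {a0 a_neq0} a0 : 0 < a by rewrite lt_def a_neq0.
set k := Num.truncn (1 / (2 * a)).
have /andP[k_le k_gt] : k%:R <= 1 / (2 * a) < k.+1%:R.
  by apply: truncn_itv; rewrite divr_ge0 ?mulr_ge0 //; lra.
rewrite ler_pdivlMr ?mulr_gt0 // in k_le.
rewrite ltr_pdivrMr ?mulr_gt0 // -natr1 in k_gt.
have sin_ge0 : 0 <= sin (pi * a) by apply: sin_ge0_pi; apply/andP; split; nra.
have cos_le : cos (pi * a) <= sin ((pi * a) *+ k).
  rewrite -[cos _]opprK -sinBpihalf -sinN opprB -mulr_natr.
  apply: ler_sin_pihalf; nra.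
have := norm_sin_mulrn (pi * a) k; rewrite (ger0_norm sin_ge0) => sin_le.
have := le_trans cos_le (le_trans (ler_norm _) sin_le); nra.
Qed.

Lemma sqr_cos_pi8_ge : 17 / 20 <= cos (pi / 8 : R) ^+ 2.
Proof.
have pi0 := pi_gt0 R.
have c4 : cos (pi / 2) = cos (pi / 4) ^+ 2 *+ 2 - 1 :> R.
  by rewrite -cos_mulr2n mulr2n; congr cos; field.
have c8 : cos (pi / 4) = cos (pi / 8) ^+ 2 *+ 2 - 1 :> R.
  by rewrite -cos_mulr2n mulr2n; congr cos; field.
rewrite cos_pihalf in c4.
have c4p : 0 <= cos (pi / 4 : R) by apply: cos_ge0_pihalf; apply/andP; split; lra.
rewrite !mulr2n in c4 c8; nra.
Qed.

Lemma cos_2pi_le a : 0 <= a <= 1 / 8 -> 68 / 5 * a ^+ 2 <= 2 - 2 * cos (2 * pi * a).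
Proof.
case/andP=> a0 a8; have pi0 := pi_gt0 R.
rewrite (_ : 2 * pi * a = (pi * a) *+ 2); last by rewrite mulr2n; ring.
rewrite cos_mulr2n cos2sin2 mulr2n.
have cos_a : cos (pi / 8) <= cos (pi * a) by apply: ler_cos_pi; nra.
have c8p : 0 <= cos (pi / 8 : R) by apply: cos_ge0_pihalf; apply/andP; split; lra.
have hs : 2 * a * cos (pi * a) <= sin (pi * a) by apply: cos_mul_le_sin; lra.
have h8 := sqr_cos_pi8_ge.
have hsq : (2 * a * cos (pi * a)) ^+ 2 <= sin (pi * a) ^+ 2.
  have ca0 : 0 <= cos (pi * a) by lra.
  by rewrite ler_sqr ?nnegrE ?mulr_ge0 // (le_trans _ hs) ?mulr_ge0.
have hc : cos (pi / 8) ^+ 2 <= cos (pi * a) ^+ 2 by rewrite ler_sqr ?nnegrE //; lra.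
rewrite !exprMn in hsq; nra.
Qed.

End Trigonometry.

Definition cdist (n x : nat) : nat := minn (x %% n) (n - x %% n).

Lemma cdist_le_half n x : (2 * cdist n x <= n)%N.
Proof. rewrite /cdist; lia. Qed.

Section CyclicDistance.
Variable R : realType.

Lemma cos_2pi_cdist n x : (0 < n)%N ->
  cos (2 * pi * x%:R / n%:R) = cos (2 * pi * (cdist n x)%:R / n%:R) :> R.
Proof.
move=> n0; have nR : n%:R != 0 :> R by rewrite pnatr_eq0 -lt0n.
have cos_period k (y : R) : cos (y + 2 * pi * k%:R) = cos y.
  by rewrite -(periodicn (@cosD2pi R) k y) -mulrnA -(mulr_natr pi) natrM mulrCA mulrA.
have -> : cos (2 * pi * x%:R / n%:R) = cos (2 * pi * (x %% n)%:R / n%:R) :> R.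
  rewrite -[RHS](cos_period (x %/ n)%N); congr cos.
  by rewrite {1}(divn_eq x n) natrD natrM; field.
rewrite /cdist /minn; case: ifP => // _.
rewrite natrB ?(ltnW (ltn_pmod x n0)) // -cosN -(cos_period 1%N).
by congr cos; field.
Qed.

Lemma cos_2pi_div_le n x T : (0 < n)%N -> (8 * T <= n)%N ->
  68 / 5 * ((minn (cdist n x) T)%:R / n%:R) ^+ 2 <= 2 - 2 * cos (2 * pi * x%:R / n%:R) :> R.
Proof.
move=> n0 Tn; have nR : 0 < n%:R :> R by rewrite ltr0n.
have pi0 := pi_gt0 R.
rewrite cos_2pi_cdist //; set d := cdist n x; set e := minn d T.
have dR : (2 * d)%:R <= n%:R :> R by rewrite ler_nat cdist_le_half.
have eR : (8 * e)%:R <= n%:R :> R by rewrite ler_nat /e; lia.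
have edR : e%:R <= d%:R :> R by rewrite ler_nat /e geq_minl.
rewrite !natrM in dR eR.
have cos_de : cos (2 * pi * d%:R / n%:R) <= cos (2 * pi * e%:R / n%:R) :> R.
  apply: ler_cos_pi.
  - by rewrite !mulr_ge0 ?invr_ge0 // ltW.
  - by rewrite ler_pM2r ?invr_gt0 // ler_pM2l //; lra.
  - by rewrite ler_pdivrMr //; nra.
have e_bound : 0 <= (e%:R / n%:R : R) <= 1 / 8.
  by rewrite divr_ge0 ?(ltW nR) //= ler_pdivrMr //; lra.
by have := cos_2pi_le e_bound; rewrite [2 * pi * _]mulrA; lra.
Qed.

End CyclicDistance.

Section Counting.
Local Open Scope nat_scope.

Lemma mul_modn_inj_window n q s : coprime q n ->
  {in [pred i | s <= i < s + n] &, injective (fun i => q * i %% n)}.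
Proof.
move=> co_qn.
suff le_inj i j : s <= i <= j -> j < s + n -> q * i = q * j %[mod n] -> i = j.
  move=> i j /andP[si ilt] /andP[sj jlt] eq_ij; have [ij|/ltnW ji] := leqP i j.
    by apply: le_inj; rewrite ?si.
  by apply/esym/le_inj; rewrite ?sj ?ji.
move=> /andP[si ij] jlt /eqP; rewrite eq_sym eqn_mod_dvd ?leq_mul2l ?ij ?orbT //.
rewrite -mulnBr Gauss_dvdr 1?coprime_sym //.
have [ji0|ji_gt0 /dvdn_leq] := posnP (j - i); first by lia.
by move/(_ ji_gt0); lia.
Qed.

Lemma count_cdist_le n q s l t : coprime q n -> l <= n ->
  count (fun i => cdist n (q * i) <= t) (iota s l) <= t.*2.+1.
Proof.
move=> co_qn ln; have [n0|n_gt0] := posnP n.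
  by move: ln; rewrite n0 leqn0 => /eqP->.
rewrite -size_filter; set f := [seq i <- iota s l | _].
have f_in i : i \in f -> s <= i < s + n by rewrite mem_filter mem_iota; lia.
have uniq_f : uniq [seq q * i %% n | i <- f].
  rewrite map_inj_in_uniq ?filter_uniq ?iota_uniq // => i j /f_in fi /f_in fj.
  exact: (mul_modn_inj_window co_qn fi fj).
have sub_f : {subset [seq q * i %% n | i <- f] <= iota 0 t.+1 ++ iota (n - t) t}.
  move=> y /mapP[i]; rewrite mem_filter => /andP[hi _] ->.
  have := ltn_pmod (q * i) n_gt0; rewrite mem_cat !mem_iota.
  by move: hi; rewrite /cdist; lia.
by have := uniq_leq_size uniq_f sub_f; rewrite size_map size_cat !size_iota; lia.
Qed.

Lemma sqr_minn_layers d T : minn d T ^ 2 = \sum_(t < T) (t < d) * t.*2.+1.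
Proof.
elim: T => [|T IH]; first by rewrite big_ord0 minn0.
rewrite big_ord_recr /= -IH; have [lt_Td|le_dT] := ltnP T d.
  by rewrite (_ : minn d T.+1 = T.+1) ?(_ : minn d T = T); lia.
by rewrite (_ : minn d T.+1 = d) ?(_ : minn d T = d) ?muln0 ?addn0; lia.
Qed.

(* 3 \sum_{t<T} (2t+1)^2 = 4T^3 - T, rearranged to avoid subtraction. *)
Lemma sum_odd_layers l T : T.*2 <= l ->
  3 * (\sum_(t < T) t.*2.+1 * (l - t.*2.+1)) + 4 * T ^ 3 = 3 * l * T ^ 2 + T.
Proof.
elim: T => [|T IH] le_Tl; first by rewrite big_ord0 !muln0.
rewrite big_ord_recr /=; have := IH (leq_trans (leqnSn _) (ltnW le_Tl)).
set S := \sum_(t < T) _; rewrite doubleS in le_Tl.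
have [m ->] : exists m, l = m + T.*2.+1 by exists (l - T.*2.+1); rewrite subnK // ltnW.
by rewrite addnK -!addnn !expnS !expn0 !muln1; lia.
Qed.

Lemma sum_sqr_minn_ge (d : nat -> nat) (r : seq nat) T :
  (forall t, count (fun i => d i <= t) r <= t.*2.+1) -> T.*2 <= size r ->
  3 * size r * T ^ 2 <= 3 * (\sum_(i <- r) minn (d i) T ^ 2) + 4 * T ^ 3.
Proof.
move=> few_small le_Tr.
have -> : \sum_(i <- r) minn (d i) T ^ 2 = \sum_(t < T) t.*2.+1 * count (fun i => t < d i) r.
  under eq_bigr do rewrite sqr_minn_layers.
  rewrite exchange_big; apply: eq_bigr => t _.
  rewrite -sum1_count big_distrr [RHS]big_mkcond; apply: eq_bigr => i _.
  by case: (t < d i) => /=; rewrite ?mul1n ?muln1.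
have many_large t : size r - t.*2.+1 <= count (fun i => t < d i) r.
  have := count_predC (fun i => d i <= t) r; have := few_small t.
  have -> : count (predC (fun i => d i <= t)) r = count (fun i => t < d i) r.
    by apply: eq_count => i; rewrite /= -ltnNge.
  lia.
have := sum_odd_layers le_Tr; suff : \sum_(t < T) t.*2.+1 * (size r - t.*2.+1)
   <= \sum_(t < T) t.*2.+1 * count (fun i => t < d i) r by lia.
by apply: leq_sum => t _; rewrite leq_mul2l many_large orbT.
Qed.

Lemma double_sum_subn k : 2 * \sum_(0 <= i < k.+1) (k - i) = k * k.+1.
Proof.
elim: k => [|k IH]; first by rewrite big_nat1.
by rewrite big_nat_recl //= subn0 (eq_bigr (fun i => k - i)) // mulnDr IH; lia.
Qed.

Lemma sum_distn_le l k : k < l -> 2 * \sum_(0 <= i < l) ((i - k) + (k - i)) <= l * l.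
Proof.
elim: l => // l IH; rewrite ltnS leq_eqVlt => /orP[/eqP<-|lt_kl].
  rewrite (eq_big_nat _ _ (F2 := fun i => k - i)) ?double_sum_subn; first by nia.
  by move=> i /andP[_ lt_ik]; lia.
by rewrite big_nat_recr //= mulnDr; have := IH lt_kl; nia.
Qed.

End Counting.

Section Window.
Variable R : realDomainType.
Implicit Types f w : nat -> R.

Lemma sum_subinterval_le (F : nat -> R) a b l : (forall j, 0 <= F j) ->
  (a <= b <= l)%N -> \sum_(a <= j < b) F j <= \sum_(0 <= j < l) F j.
Proof.
move=> F_ge0 /andP[ab bl].
rewrite (big_cat_nat (leq0n a) (leq_trans ab bl)) (big_cat_nat ab bl) /=.
by rewrite addrCA lerDl addr_ge0 ?sumr_ge0.
Qed.

Definition energy f l := \sum_(0 <= j < l) (f j - f j.+1) ^+ 2.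

Lemma energy_ge0 f l : 0 <= energy f l.
Proof. by apply: sumr_ge0 => j _; apply: sqr_ge0. Qed.

(* Cauchy-Schwarz along the path a, a+1, ..., a+m. *)
Lemma sqr_sub_le_path f a m :
  (f a - f (a + m)%N) ^+ 2 <= m%:R * \sum_(a <= j < a + m) (f j - f j.+1) ^+ 2.
Proof.
elim: m => [|m IH]; first by rewrite addn0 subrr expr0n /= mul0r.
rewrite addnS big_nat_recr ?leq_addr //=.
set A := \sum_(a <= j < a + m) _; set u := f a - f (a + m)%N.
set d := f (a + m)%N - f (a + m).+1.
have -> : f a - f (a + m).+1 = u + d by rewrite /u /d; ring.
have {}IH : u ^+ 2 <= m%:R * A := IH.
have A0 : 0 <= A by apply: sumr_ge0 => j _; apply: sqr_ge0.
have [m0|m_gt0] := posnP m.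
  by move: IH; rewrite /u /A m0 addn0 subrr big_geq // add0r add0r mul1r.
have mR : 0 < m%:R :> R by rewrite ltr0n.
(* Multiplied by m, this follows from u^2 <= m A and (m d - u)^2 >= 0. *)
have cross : 2 * u * d <= A + m%:R * d ^+ 2.
  rewrite -(ler_pM2l mR); have := sqr_ge0 (m%:R * d - u).
  by rewrite !expr2 in IH *; nra.
by rewrite -natr1 !expr2 in IH cross *; nra.
Qed.

Lemma sqr_sub_le_energy f l i k : (i < l)%N -> (k < l)%N ->
  (f i - f k) ^+ 2 <= ((i - k) + (k - i))%N%:R * energy f l.
Proof.
suff le_path a b : (a <= b)%N -> (b < l)%N -> (f a - f b) ^+ 2 <= (b - a)%N%:R * energy f l.
  move=> il kl; have [ik|/ltnW ki] := leqP i k.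
    by rewrite (_ : (i - k)%N = 0%N) ?add0n ?le_path //; lia.
  by rewrite (_ : (k - i)%N = 0%N) ?addn0 -1?sqrrN ?opprB ?le_path //; lia.
move=> ab; have [m ->] : exists m, b = (a + m)%N by exists (b - a)%N; rewrite subnKC.
move=> bl; rewrite addKn (le_trans (sqr_sub_le_path f a m)) // ler_wpM2l //.
by apply: sum_subinterval_le => [j|]; [apply: sqr_ge0 | rewrite leq_addr; lia].
Qed.

Lemma weighted_sum_sqr_le f w l : (forall i, 0 <= w i) ->
  (\sum_(0 <= i < l) w i) * (\sum_(0 <= i < l) f i ^+ 2) <=
  2 * l%:R * (\sum_(0 <= i < l) w i * f i ^+ 2)
  + l%:R * l%:R * (\sum_(0 <= i < l) w i) * energy f l.
Proof.
move=> w_ge0; have E0 := energy_ge0 f l.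
rewrite mulr_suml.
have -> : 2 * l%:R * (\sum_(0 <= i < l) w i * f i ^+ 2)
    + l%:R * l%:R * (\sum_(0 <= i < l) w i) * energy f l
  = \sum_(0 <= k < l) (2 * l%:R * (w k * f k ^+ 2) + l%:R * l%:R * w k * energy f l).
  by rewrite big_split /= -mulr_sumr -mulr_suml -mulr_sumr.
apply: ler_sum_nat => k /andP[_ kl].
have sum_diff : 2 * \sum_(0 <= i < l) (f i - f k) ^+ 2 <= l%:R * l%:R * energy f l.
  have := sum_distn_le kl; rewrite -(ler_nat R) !natrM natr_sum => /(ler_wpM2r E0).
  apply: le_trans; rewrite -mulrA ler_pM2l ?ltr0n // mulr_suml.
  by apply: ler_sum_nat => i /andP[_ il]; apply: sqr_sub_le_energy.
have sum_sqr : \sum_(0 <= i < l) f i ^+ 2 <=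
    2 * l%:R * f k ^+ 2 + 2 * \sum_(0 <= i < l) (f i - f k) ^+ 2.
  have -> : 2 * l%:R * f k ^+ 2 = \sum_(0 <= i < l) 2 * f k ^+ 2.
    by rewrite sumr_const_nat subn0 -[RHS]mulr_natr; ring.
  rewrite mulr_sumr -big_split /=; apply: ler_sum_nat => i _.
  by have := sqr_ge0 (f i - 2 * f k); rewrite !expr2; nra.
have := w_ge0 k; have := ler_wpM2l (w_ge0 k) (le_trans sum_sqr (lerD (lexx _) sum_diff)); nra.
Qed.

End Window.

Lemma sum_nat_shift (V : nmodType) (F : nat -> V) s l :
  \sum_(s <= i < s + l) F i = \sum_(0 <= j < l) F (j + s)%N.
Proof. by rewrite -{1}(add0n s) big_addn addKn. Qed.

Lemma sum_nat_blocks (V : nmodType) (F : nat -> V) n m : (0 < m)%N ->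
  \sum_(0 <= i < n) F i = \sum_(0 <= k < m) \sum_(k * n %/ m <= i < k.+1 * n %/ m) F i.
Proof.
move=> m0; suff sum_prefix j : \sum_(0 <= i < j * n %/ m) F i =
    \sum_(0 <= k < j) \sum_(k * n %/ m <= i < k.+1 * n %/ m) F i by rewrite -sum_prefix mulKn.
elim: j => [|j IH]; first by rewrite mul0n div0n !big_geq.
rewrite big_nat_recr //= -IH (@big_cat_nat _ _ _ (j * n %/ m)) //.
by apply: leq_div2r; rewrite leq_mul2r leqnSn orbT.
Qed.

Lemma block_length n m k : (0 < m)%N ->
  (k.+1 * n %/ m = k * n %/ m + (n %/ m + (m <= k * n %% m + n %% m)))%N.
Proof. by move=> m0; rewrite mulSnr divnD // addnA. Qed.

Section Blocks.
Variable R : realType.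

Definition weight (n q i : nat) : R := 2 - 2 * cos (2 * pi * q%:R * i%:R / n%:R).

Lemma weight_ge0 n q i : 0 <= weight n q i.
Proof. by rewrite /weight; have := cos_le1 (2 * pi * q%:R * i%:R / n%:R : R); lra. Qed.

Lemma block_weight_ge n q s l T : coprime q n -> (l <= n)%N -> (T.*2 <= l)%N ->
  (8 * T <= n)%N -> (9 * n <= 34 * T ^ 2)%N ->
  6 * l%:R <= 5 * n%:R * \sum_(s <= i < s + l) weight n q i.
Proof.
move=> co_qn ln le_Tl Tn nT; have [n0|n_gt0] := posnP n.
  by move: ln; rewrite n0 leqn0 => /eqP->; rewrite !mulr0n !(mulr0, mul0r).
have nR : 0 < n%:R :> R by rewrite ltr0n.
set G := (\sum_(s <= i < s + l) minn (cdist n (q * i)) T ^ 2)%N.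
have few_close : (3 * l * T ^ 2 <= 3 * G + 4 * T ^ 3)%N.
  have size_r : size (index_iota s (s + l)) = l by rewrite size_iota addKn.
  rewrite -{1}size_r; apply: sum_sqr_minn_ge; last by rewrite size_r.
  by move=> t; rewrite /index_iota addKn; apply: count_cdist_le.
have G_large : (6 * l * n <= 68 * G)%N.
  have h1 : (2 * l * (9 * n) <= 2 * l * (34 * T ^ 2))%N by rewrite leq_mul2l nT orbT.
  have h2 : (136 * T ^ 2 * T.*2 <= 136 * T ^ 2 * l)%N by rewrite leq_mul2l le_Tl orbT.
  rewrite -!addnn !expnS expn0 muln1 in few_close h1 h2 *; nia.
have W_ge : 68 / 5 * (G%:R / n%:R ^+ 2) <= \sum_(s <= i < s + l) weight n q i.
  rewrite /G natr_sum mulr_suml mulr_sumr; apply: ler_sum => i _.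
  by rewrite /weight natrX -expr_div_n -[2 * pi * _ * _]mulrA -natrM cos_2pi_div_le.
apply: le_trans (ler_wpM2l _ W_ge); last by rewrite mulr_ge0 ?ler0n.
rewrite (_ : 5 * n%:R * _ = 68 * G%:R / n%:R); last by field; rewrite gt_eqF.
rewrite ler_pdivlMr //; have := G_large; rewrite -(ler_nat R) !natrM; lra.
Qed.

Lemma block_sum_sqr_le n q (X : nat -> R) s l T : coprime q n -> (l <= n)%N ->
  (T.*2 <= l)%N -> (8 * T <= n)%N -> (9 * n <= 34 * T ^ 2)%N -> (3 * l ^ 2 <= 5 * n)%N ->
  3 * \sum_(s <= i < s + l) X i ^+ 2 <=
  5 * n%:R * (\sum_(s <= i < s + l) weight n q i * X i ^+ 2 +
              \sum_(s <= i < s + l) (X i - X i.+1) ^+ 2).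
Proof.
move=> co_qn ln le_Tl Tn nT ln2.
have W_ge := block_weight_ge s co_qn ln le_Tl Tn nT.
rewrite !(sum_nat_shift _ s) in W_ge *.
set W := \sum_(0 <= j < l) _ in W_ge; set S := \sum_(0 <= j < l) _.
set P := \sum_(0 <= j < l) _ * _.
have -> : \sum_(0 <= j < l) (X (j + s)%N - X (j + s)%N.+1) ^+ 2 = energy (fun j => X (j + s)%N) l.
  by apply: eq_bigr => j _; rewrite addSn.
set D := energy _ l.
have := weighted_sum_sqr_le (fun j => X (j + s)%N) l (fun j => weight_ge0 n q (j + s)).
rewrite -/W -/S -/P -/D => win.
have D0 : 0 <= D := energy_ge0 _ l.
have P0 : 0 <= P by apply: sumr_ge0 => j _; rewrite mulr_ge0 ?weight_ge0 ?sqr_ge0.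
have ln2R : 3 * l%:R ^+ 2 <= 5 * n%:R :> R by rewrite -natrX -!natrM ler_nat.
have [l0|l_gt0] := posnP l.
  by rewrite /S /P /D /energy l0 !big_geq // addr0 !mulr0.
have nR : 0 < n%:R :> R by rewrite ltr0n (leq_trans l_gt0 ln).
have W_gt0 : 0 < W.
  have : 0 < 5 * n%:R * W by apply: lt_le_trans W_ge; rewrite mulr_gt0 // ltr0n.
  by rewrite pmulr_rgt0 // mulr_gt0.
have h1 : 6 * l%:R * P <= 5 * n%:R * W * P := ler_wpM2r P0 W_ge.
have h2 : 3 * l%:R ^+ 2 * (W * D) <= 5 * n%:R * (W * D).
  by rewrite ler_wpM2r // mulr_ge0 // ltW.
by rewrite -(ler_pM2l W_gt0); rewrite expr2 in h2; lra.
Qed.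

End Blocks.

Section BlockParameters.
Local Open Scope nat_scope.

Lemma exists_sqr_bracket d N : 0 < d -> exists m, d * m ^ 2 <= N < d * m.+1 ^ 2.
Proof.
move=> d_gt0; elim: N => [|N [m /andP[lo hi]]]; first by exists 0; rewrite muln0 /= muln_gt0 d_gt0.
have [le_N|lt_N] := leqP (d * m.+1 ^ 2) N.+1; last by exists m; rewrite lt_N (leq_trans lo).
exists m.+1; rewrite le_N /=; apply: leq_trans (_ : d * m.+1 ^ 2 < _).
  by rewrite ltnS -ltnS.
by rewrite ltn_pmul2l // ltn_exp2r.
Qed.

(* m ~ sqrt(3n)/2 blocks of length L ~ sqrt(4n/3), and T := L/2 in [block_sum_sqr_le]. *)
Lemma block_params n m : 100 * 100 <= n -> 4 * m ^ 2 <= 3 * n < 4 * m.+1 ^ 2 ->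
  let L := n %/ m in let T := L./2 in
  [/\ 0 < m, 9 * n <= 34 * T ^ 2, 3 * L.+1 ^ 2 <= 5 * n, T.*2 <= L & L.+1 <= n /\ 8 * T <= n].
Proof.
move=> n_large /andP[lo hi] L T; rewrite !expnS !expn0 !muln1 in lo hi *.
have m_large : 86 <= m.
  case: (leqP 86 m) => // hm.
  have : m.+1 * m.+1 <= 86 * 86 by apply: leq_mul.
  lia.
have hL1 : L * m <= n by apply: leq_divM.
have hL2 : n < L.+1 * m by apply: ltn_ceil; lia.
have hT : T.*2 <= L <= T.*2.+1.
  by rewrite /T -{1 3}(odd_double_half L); case: (odd L) => /=; lia.
have a1 : n < (2 * T + 2) * m by move: hT; rewrite -addnn; nia.
have a3 : n < 3 * ((T + 1) * (T + 1)).
  have : n * n < 3 * ((T + 1) * (T + 1)) * n.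
    by have : n * n < ((2 * T + 2) * m) * ((2 * T + 2) * m); nia.
  nia.
have T_large : 57 <= T by nia.
have b3 : L.+1 * m <= n + m by lia.
have hb : 3 * (L.+1 * L.+1) <= 5 * n.
  have c2 : 3 * (L.+1 * L.+1) * (m * m) <= 5 * n * (m * m).
    have := leq_mul b3 b3; nia.
  by rewrite leq_pmul2r ?muln_gt0 ?(leq_trans _ m_large) in c2.
split => //; [lia | nia | nia | split].
  have : 4 * L <= n.
    case: (leqP (4 * L) n) => // hc.
    by have := ltn_mul hc hc; nia.
  lia.
by move: hT; rewrite -addnn; nia.
Qed.

End BlockParameters.

Lemma sum_sqr_le_weight_energy (R : realType) n q (X : nat -> R) :
  coprime q n -> (100 * 100 <= n)%N ->
  3 * \sum_(0 <= i < n) X i ^+ 2 <=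
  5 * n%:R * (\sum_(0 <= i < n) weight R n q i * X i ^+ 2 +
              \sum_(0 <= i < n) (X i - X i.+1) ^+ 2).
Proof.
move=> co_qn n_large; have [m bracket] := exists_sqr_bracket (3 * n) (isT : (0 < 4)%N).
have [m0 hT hL hTL [Ln Tn]] := block_params n_large bracket.
rewrite !(sum_nat_blocks _ n m0) -big_split /= mulr_sumr mulr_sumr.
apply: ler_sum_nat => k _; rewrite block_length //.
set l := (n %/ m + _)%N.
have lL : (n %/ m <= l <= (n %/ m).+1)%N by rewrite /l; case: (m <= _)%N => /=; lia.
apply: (@block_sum_sqr_le R n q X _ l (n %/ m)./2) => //; [lia | lia |].
by apply: leq_trans hL; rewrite leq_mul2l /= leq_exp2r //; lia.
Qed.

Section Matrix.
Variable R : realType.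

Lemma Mnq_entry n q (j k : 'I_n) : (2 < n)%N ->
  Mnq R n q j k = (if j == k then 2 * cos (2 * pi * q%:R * j%:R / n%:R) else 0)
                  + ((k == ordS j)%:R + (j == ordS k)%:R).
Proof.
move=> n_gt2; rewrite mxE; congr (_ + _).
rewrite (_ : (k == ordS j) = (k == j.+1 %% n :> nat)%N) //.
rewrite (_ : (j == ordS k) = (j == k.+1 %% n :> nat)%N) //.
have [kSj|_] /= := eqVneq (k : nat) (j.+1 %% n)%N; last by rewrite add0r; case: eqP.
have [jSk|] /= := eqVneq (j : nat) (k.+1 %% n)%N; last by rewrite addr0.
have modS (i : 'I_n) : (i.+1 %% n = if i.+1 == n then 0 else i.+1)%N.
  by case: eqP => [->|ne]; [exact: modnn | apply: modn_small; have := ltn_ord i; lia].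
by exfalso; move: kSj jSk; rewrite !modS; do 2 case: eqP; lia.
Qed.

Lemma sum_if_eq (V : nmodType) (I : finType) (F : I -> V) (b : I) :
  \sum_(i : I) (if i == b then F i else 0) = F b.
Proof. by rewrite -big_mkcond big_pred1_eq. Qed.

Lemma Mnq_quadratic_form n q (v : 'rV[R]_n) : (2 < n)%N ->
  \sum_(k < n) (v *m Mnq R n q) ord0 k * v ord0 k =
  \sum_(k < n) (2 * cos (2 * pi * q%:R * k%:R / n%:R) * v ord0 k ^+ 2
                + 2 * (v ord0 k * v ord0 (ordS k))).
Proof.
move=> n_gt2; pose c (k : 'I_n) : R := 2 * cos (2 * pi * q%:R * k%:R / n%:R).
have col k : (v *m Mnq R n q) ord0 k =
    c k * v ord0 k + \sum_(j < n) (if k == ordS j then v ord0 j else 0) + v ord0 (ordS k).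
  rewrite mxE (eq_bigr (fun j => (if j == k then v ord0 k * c k else 0) +
      (if k == ordS j then v ord0 j else 0) + (if j == ordS k then v ord0 (ordS k) else 0))).
    by rewrite !big_split /= !sum_if_eq mulrC.
  move=> j _; rewrite Mnq_entry // mulrDr [v ord0 j * (_ + _)]mulrDr addrA.
  congr (_ + _ + _).
  - by case: eqP => [->|_]; rewrite ?mulr0.
  - by case: eqP; rewrite ?mulr1 ?mulr0.
  - by case: eqP => [->|_]; rewrite ?mulr1 ?mulr0.
have mid : \sum_(k < n) (\sum_(j < n) (if k == ordS j then v ord0 j else 0)) * v ord0 k =
    \sum_(j < n) v ord0 j * v ord0 (ordS j).
  under eq_bigr do rewrite mulr_suml.
  rewrite exchange_big; apply: eq_bigr => j _ /=.
  rewrite (eq_bigr (fun k => if k == ordS j then v ord0 j * v ord0 (ordS j) else 0)) ?sum_if_eq //.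
  by move=> k _; case: eqP => [->|]; rewrite ?mul0r.
under eq_bigr do rewrite col 2!mulrDl.
rewrite !big_split /= mid -!big_split /=; apply: eq_bigr => k _; rewrite /c; ring.
Qed.

Lemma eigenvector_energy n q (v : 'rV[R]_n) a : (2 < n)%N -> v *m Mnq R n q = a *: v ->
  (4 - a) * \sum_(k < n) v ord0 k ^+ 2 =
  \sum_(k < n) (weight R n q k * v ord0 k ^+ 2 + (v ord0 k - v ord0 (ordS k)) ^+ 2).
Proof.
move=> n_gt2 eig.
have form : a * \sum_(k < n) v ord0 k ^+ 2 = \sum_(k < n)
    (2 * cos (2 * pi * q%:R * k%:R / n%:R) * v ord0 k ^+ 2 + 2 * (v ord0 k * v ord0 (ordS k))).
  rewrite -Mnq_quadratic_form // eig mulr_sumr; apply: eq_bigr => k _.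
  by rewrite !mxE -mulrA -expr2.
have rot : \sum_(k < n) v ord0 (ordS k) ^+ 2 = \sum_(k < n) v ord0 k ^+ 2.
  by rewrite [RHS](reindex_inj (@ordS_inj n)).
apply/eqP; rewrite -subr_eq0 mulrBl form mulr_sumr -!sumrB.
rewrite (eq_bigr (fun k => v ord0 k ^+ 2 - v ord0 (ordS k) ^+ 2)) => [|k _].
  by rewrite sumrB rot subrr.
by rewrite /weight; ring.
Qed.

Lemma sum_sqr_row_gt0 n (v : 'rV[R]_n) : v != 0 -> 0 < \sum_(k < n) v ord0 k ^+ 2.
Proof.
move=> v_neq0; rewrite lt_def sumr_ge0 ?andbT => [|k _]; last exact: sqr_ge0.
apply: contra v_neq0 => /eqP/psumr_eq0P v0; apply/eqP/rowP => k; rewrite mxE.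
by apply/eqP; rewrite -sqrf_eq0 v0 // => i _; exact: sqr_ge0.
Qed.

End Matrix.

Theorem lemma2p3 (R : realType) :
  exists n0 : nat, forall n q : nat, prime n -> (n0 <= n)%N ->
    (1 <= q <= n.-1)%N ->
    forall a : R, eigenvalue (Mnq R n q) a -> a <= 4 - 3 / (5 * n%:R).
Proof.
exists (100 * 100)%N => n q n_prime n_large /andP[q_gt0 q_lt] a /eigenvalueP[v eig v_neq0].
have n_gt2 : (2 < n)%N by lia.
have n_gt0 : (0 < n)%N by lia.
have co_qn : coprime q n.
  by rewrite coprime_sym prime_coprime //; apply/negP => /(dvdn_leq q_gt0); lia.
pose u i := v ord0 (Ordinal (ltn_pmod i n_gt0)).
have vX (k : 'I_n) : v ord0 k = u k by congr (v _ _); apply: val_inj; rewrite /= modn_small.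
have vS (k : 'I_n) : v ord0 (ordS k) = u k.+1 by congr (v _ _); apply: val_inj.
have := sum_sqr_le_weight_energy u co_qn n_large; rewrite !big_mkord -big_split /=.
under eq_bigr do rewrite -vX; under [X in _ <= _ * X]eq_bigr do rewrite -vS -vX.
rewrite -(eigenvector_energy n_gt2 eig); set S := \sum_(k < n) _ => ineq.
have S_gt0 : 0 < S := sum_sqr_row_gt0 v_neq0.
have n5 : 0 < 5 * n%:R :> R by rewrite mulr_gt0 // ltr0n.
suff : 3 / (5 * n%:R) * S <= (4 - a) * S by rewrite ler_pM2r //; lra.
by rewrite -(ler_pM2l n5) mulrA mulrCA divff ?gt_eqF // mulr1.
Qed.
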